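(* Fix $y$ with $\phi_0(y)\neq0$. Define $\gamma_0(y)=1/\phi_0(y)$ and, recursively for $n\ge1$, $$\gamma_n(y)=-\frac{1}{\phi_0(y)}\sum_{j=1}^{n}\binom{n}{j}\phi_j(y)\,\gamma_{n-j}(y).$$ Then, for every $x$, $${}_G\lambda_0^{R}(x,y)=\frac{1}{\gamma_0(y)}\,\Gamma(R+I)\,\Gamma(2R+I)^{-1}.$$ Moreover, for every $n\ge1$, $${}_G\lambda_n^{R}(x,y)=\frac{(-1)^n}{\gamma_0(y)^{n+1}}\det M_n,$$ where $M_n$ is the $(n+1)\times(n+1)$ array with rows indexed $i=0,\dots,n$ and columns indexed $k=0,\dots,n$, as follows: - Row $0$ is $\big(\lambda_0^R(x),\lambda_1^R(x),\dots,\lambda_n^R(x)\big)$, where $\lambda_0^R(x)=\Gamma(R+I)\Gamma(2R+I)^{-1}$. - For $1\le i\le n$, the entries of row $i$ are $$(M_n)_{i,k}=\binom{k}{i-1}\gamma_{k-i+1}(y)\ \text{ if } k\ge i-1,\qquad (M_n)_{i,k}=0\ \text{ otherwise}.$$ For example, row $1$ is $(\gamma_0,\gamma_1,\dots,\gamma_n)$, row $2$ is $(0,\gamma_0,2\gamma_1,\dots,\binom{n}{1}\gamma_{n-1})$, and the last row is $(0,\dots,0,\gamma_0,\binom{n}{1}\gamma_1)$. Only row $0$ has matrix entries, so $\det M_n$ is understood as the Laplace expansion along row $0$: $$\det M_n=\sum_{k=0}^n(-1)^k\lambda_k^R(x)\,\det M_n^{(0,k)},$$ where $M_n^{(0,k)}$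 is the scalar minor obtained by deleting row $0$ and column $k$.
   Context: Let $N\ge 1$ and let $R\in\mathbb{C}^{N\times N}$ be positive stable, i.e. every eigenvalue of $R$ has positive real part. $I$ denotes the $N\times N$ identity matrix, and $\Gamma$ of a matrix is defined by the holomorphic functional calculus. For such $R$ and every integer $j\ge0$ the matrix $\Gamma(2R+(2j+1)I)$ is invertible. Put $$c_j(R)=\Gamma(R+(j+1)I)\,\Gamma(2R+(2j+1)I)^{-1}\qquad (j\ge 0).$$ The one-variable $\lambda$-matrix polynomials are $$\lambda_n^R(x)=\sum_{j=0}^n\binom{n}{j}(-1)^j c_j(R)\,x^{n-j}.$$ Let $(\phi_n(y))_{n\ge0}$ be a sequence of complex-valued functions of a variable $y$. The 2-variable general-$\lambda$-matrix polynomials are defined by $${}_G\lambda_n^R(x,y)=\sum_{\substack{a,b,c\ge0\\ a+b+c=n}}\frac{n!}{a!\,b!\,c!}\,x^a\,\phi_b(y)\,(-1)^c\,c_c(R).$$ *)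

From HB Require Import structures.
From mathcomp Require Import all_boot all_order all_algebra.
From mathcomp Require Import complex.
From mathcomp Require Import reals.
Set Implicit Arguments. Unset Strict Implicit. Unset Printing Implicit Defensive.
Import Order.TTheory GRing.Theory Num.Theory.
Local Open Scope ring_scope.

Section Defs.
Variables (K : realType) (N : nat).
Local Notation C := (complex K).

Definition positive_stable (R : 'M[C]_N) : Prop :=
  forall a : C, eigenvalue R a -> 0 < complex.Re a.

(* c_j(R) = Gam(R + (j+1) I) * Gam(2R + (2j+1) I)^{-1}, where Gam is the
   (holomorphic functional calculus) matrix Gamma function, passed as a
   parameter. *)
Definition cj (Gam : 'M[C]_N -> 'M[C]_N) (R : 'M[C]_N) (j : nat) : 'M[C]_N :=
  Gam (R + (j.+1)%:R%:M) *m invmx (Gam (R *+ 2 + (j.*2.+1)%:R%:M)).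

Definition lambdaR (Gam : 'M[C]_N -> 'M[C]_N) (R : 'M[C]_N) (n : nat) (x : C)
  : 'M[C]_N :=
  \sum_(j < n.+1) (('C(n, j))%:R * (-1) ^+ j * x ^+ (n - j)) *: cj Gam R j.

Definition Glambda (Gam : 'M[C]_N -> 'M[C]_N) (R : 'M[C]_N)
  (Y : Type) (phi : nat -> Y -> C) (n : nat) (x : C) (y : Y) : 'M[C]_N :=
  \sum_(a < n.+1) \sum_(b < n.+1 | (a + b <= n)%N)
    ((n`!)%:R / ((a`!)%:R * (b`!)%:R * ((n - a - b)`!)%:R)
       * x ^+ a * phi b y * (-1) ^+ (n - a - b)) *: cj Gam R (n - a - b).

(* Rows 1..n of M_n, reindexed i' = i-1 (i' = 0..n-1), columns k = 0..n:
   entry C(k, i') gamma_{k-i'} if k >= i', else 0. *)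
Definition Mrows (gam : nat -> C) (n : nat) : 'M[C]_(n, n.+1) :=
  \matrix_(i < n, k < n.+1)
    (if (i <= k)%N then ('C(k, i))%:R * gam (k - i)%N else 0).

Definition detMn (Gam : 'M[C]_N -> 'M[C]_N) (R : 'M[C]_N) (gam : nat -> C)
  (n : nat) (x : C) : 'M[C]_N :=
  \sum_(k < n.+1) ((-1) ^+ k * \det (col' k (Mrows gam n))) *: lambdaR Gam R k x.

End Defs.

From HB Require Import structures.
From mathcomp Require Import all_boot all_order all_algebra.
From mathcomp Require Import complex.
From mathcomp Require Import reals.
From mathcomp Require Import zify ring.
Set Implicit Arguments. Unset Strict Implicit. Unset Printing Implicit Defensive.
Import Order.TTheory GRing.Theory Num.Theory.
Local Open Scope ring_scope.

(* Write (f * u)_n = \sum_i C(n,i) f_i u_(n-i) for the binomial convolution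
   (the product of exponential generating functions).  Expanding the
   trinomial coefficient gives G lambda_n = (phi * lambda)_n, and the
   recursion for gamma says exactly that gamma is the convolution inverse of
   phi, hence lambda_k = \sum_m C(k,m) gamma_(k-m) G lambda_m.  This is a
   triangular system whose coefficient rows are the rows 1..n of M_n.
   Expanding along row 0 with the cofactors of rows 1..n, each G lambda_m
   with m < n gets the determinant of a matrix with a repeated row, i.e. 0,
   and G lambda_n gets (-1)^n gamma_0^(n+1): this is Cramer's rule. *)

Lemma trinomial_fact (n a b : nat) : (a + b <= n)%N ->
  ('C(n, a) * 'C(n - a, b) * (a`! * b`! * (n - a - b)`!))%N = n`!.
Proof.
move=> le_abn; have le_an : (a <= n)%N by lia.
have le_b_na : (b <= n - a)%N by lia.
rewrite -(bin_fact le_an) -(bin_fact le_b_na); lia.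
Qed.

Lemma bin_mul_bin (n i j : nat) : (i + j <= n)%N ->
  ('C(n, i + j) * 'C(i + j, i) = 'C(n, i) * 'C(n - i, j))%N.
Proof.
move=> le_ijn; have fact_gt0' : (0 < i`! * j`! * (n - i - j)`!)%N.
  by rewrite !muln_gt0 !fact_gt0.
apply/eqP; rewrite -(eqn_pmul2r fact_gt0'); apply/eqP.
rewrite -mulnA trinomial_fact // -subnDA.
have := bin_fact le_ijn; have := bin_fact (leq_addr j i); rewrite addKn; lia.
Qed.

Lemma sum_triangle (V : nmodType) (n : nat) (F : nat -> nat -> V) :
  \sum_(l < n.+1) \sum_(i < l.+1) F i l =
  \sum_(i < n.+1) \sum_(j < (n - i).+1) F i (i + j)%N.
Proof.
transitivity (\sum_(0 <= l < n.+1) \sum_(0 <= i < n.+1 | (i <= l)%N) F i l).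
  rewrite big_mkord; apply: eq_bigr => l _.
  by rewrite (big_ord_widen _ (F^~ l) (ltn_ord l)) big_mkord.
rewrite (exchange_big_dep_nat predT) //= big_mkord; apply: eq_bigr => i _.
rewrite -(big_nat_widenl i 0 n.+1 predT) //.
rewrite -[in LHS](add0n i) big_addn subSn ?leq_ord // big_mkord.
by apply: eq_big => // j _; rewrite add0n addnC.
Qed.

Definition binconv (F : comNzRingType) (V : lmodType F)
    (f : nat -> F) (u : nat -> V) (n : nat) : V :=
  \sum_(i < n.+1) ('C(n, i)%:R * f i) *: u (n - i)%N.

Section BinomialConvolutionTheory.
Variables (F : comNzRingType) (V : lmodType F).

Lemma binconvA (f g : nat -> F) (u : nat -> V) (n : nat) :
  binconv f (binconv g u) n = binconv (binconv (V := F^o) f g) u n.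
Proof.
pose T i l := ('C(n, l)%:R * 'C(l, i)%:R * f i * g (l - i)%N) *: u (n - l)%N.
transitivity (\sum_(l < n.+1) \sum_(i < l.+1) T i l); last first.
  apply: eq_bigr => l _; rewrite mulr_sumr scaler_suml.
  by apply: eq_bigr => i _; rewrite /T !mulrA.
rewrite sum_triangle; apply: eq_bigr => i _; rewrite scaler_sumr.
apply: eq_bigr => j _; rewrite /T scalerA addKn subnDA -mulrA -natrM.
rewrite bin_mul_bin ?natrM; last by move: (ltn_ord i) (ltn_ord j); lia.
congr (_ *: _); ring.
Qed.

Lemma eq_binconv (f g : nat -> F) (u v : nat -> V) (n : nat) :
  f =1 g -> u =1 v -> binconv f u n = binconv g v n.
Proof. by move=> eq_fg eq_uv; apply: eq_bigr => i _; rewrite eq_fg eq_uv. Qed.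

Lemma binconv_widen (f : nat -> F) (u : nat -> V) (k p : nat) : (k <= p)%N ->
  binconv f u k = \sum_(m < p.+1) ('C(k, m)%:R * f (k - m)%N) *: u m.
Proof.
move=> le_kp.
transitivity (\sum_(m < k.+1) ('C(k, m)%:R * f (k - m)%N) *: u m).
  rewrite /binconv (reindex_inj rev_ord_inj); apply: eq_bigr => m _ /=.
  by rewrite subSS subKn ?leq_ord // bin_sub ?leq_ord.
rewrite (big_ord_widen p.+1 (fun m => ('C(k, m)%:R * f (k - m)%N) *: u m)
  (le_kp : (k < p.+1)%N)) big_mkcond.
by apply: eq_bigr => m _; case: ltnP => // lt_km; rewrite bin_small ?mul0r ?scale0r.
Qed.

Lemma binconv_delta (u : nat -> V) (n : nat) :
  binconv (fun k => (k == 0)%:R) u n = u n.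
Proof.
rewrite /binconv big_ord_recl big1 ?addr0 => [|i _].
  by rewrite bin0 mulr1 scale1r subn0.
by rewrite mulr0 scale0r.
Qed.

End BinomialConvolutionTheory.

Lemma binconv_scalarE (F : comNzRingType) (f g : nat -> F) (n : nat) :
  binconv (V := F^o) f g n = \sum_(i < n.+1) 'C(n, i)%:R * f i * g (n - i)%N.
Proof. by []. Qed.

Lemma binconvC (F : comNzRingType) (f g : nat -> F) (n : nat) :
  binconv (V := F^o) f g n = binconv (V := F^o) g f n.
Proof.
rewrite (binconv_widen _ _ (leqnn n)) binconv_scalarE.
by apply: eq_bigr => i _; rewrite /GRing.scale /= mulrAC.
Qed.

Section BinomialConvolutionInverse.
Variables (F : comNzRingType) (V : lmodType F).

Lemma binconvAC (f g : nat -> F) (u : nat -> V) (n : nat) :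
  binconv f (binconv g u) n = binconv g (binconv f u) n.
Proof. by rewrite !binconvA; apply: eq_binconv => // k; rewrite binconvC. Qed.

Lemma binconvK (f g : nat -> F) (u : nat -> V) (n : nat) :
  (forall k, binconv (V := F^o) f g k = (k == 0)%:R) ->
  binconv g (binconv f u) n = u n.
Proof.
move=> fg_delta; rewrite binconvA -[RHS]binconv_delta.
by apply: eq_binconv => // k; rewrite binconvC fg_delta.
Qed.

End BinomialConvolutionInverse.

Lemma binconv_recursive_inverse (F : comUnitRingType) (phi gam : nat -> F) :
  phi 0%N \is a GRing.unit -> gam 0%N = (phi 0%N)^-1 ->
  (forall n, (1 <= n)%N ->
     gam n = - (phi 0%N)^-1 *
       \sum_(1 <= j < n.+1) 'C(n, j)%:R * phi j * gam (n - j)%N) ->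
  forall n, binconv (V := F^o) phi gam n = (n == 0)%:R.
Proof.
move=> phi0_unit gam0 gamS [|n]; rewrite binconv_scalarE.
  by rewrite big_ord1 mul1r gam0 divrr.
rewrite big_ord_recl bin0 mul1r subn0 (gamS n.+1) //.
by rewrite big_add1 big_mkord /= mulrA mulrN divrr // mulN1r addNr.
Qed.

Lemma trinomial_coefE (F : numFieldType) (n a b : nat) : (a + b <= n)%N ->
  (n`!)%:R / ((a`!)%:R * (b`!)%:R * ((n - a - b)`!)%:R)
  = 'C(n, a)%:R * 'C(n - a, b)%:R :> F.
Proof.
move=> le_abn; rewrite -(trinomial_fact le_abn) !natrM mulfK //.
by rewrite !mulf_neq0 // pnatr_eq0 -lt0n fact_gt0.
Qed.

Section GeneralLambda.
Variables (K : realType) (N : nat).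
Local Notation C := (complex K).
Variables (Gam : 'M[C]_N -> 'M[C]_N) (R : 'M[C]_N).

Let signed_cj (c : nat) : 'M[C]_N := (-1) ^+ c *: cj Gam R c.

Lemma lambdaR_binconv (x : C) (k : nat) :
  lambdaR Gam R k x = binconv (fun a => x ^+ a) signed_cj k.
Proof.
rewrite (binconv_widen _ _ (leqnn k)); apply: eq_bigr => j _.
by rewrite /signed_cj scalerA; congr (_ *: _); ring.
Qed.

Lemma Glambda_trinomial (Y : Type) (phi : nat -> Y -> C) (n : nat) x y :
  Glambda Gam R phi n x y =
  binconv (fun a => x ^+ a) (binconv (phi^~ y) signed_cj) n.
Proof.
rewrite /Glambda /binconv; apply: eq_bigr => a _; rewrite scaler_sumr.
rewrite (big_ord_widen n.+1 (fun b => ('C(n, a)%:R * x ^+ a) *: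
  (('C(n - a, b)%:R * phi b y) *: signed_cj (n - a - b)%N))
  (leq_subr a n : (n - a < n.+1)%N)).
apply: eq_big => [b | b le_abn] /=; first by rewrite ltnS leq_subRL ?leq_ord.
rewrite /signed_cj !scalerA trinomial_coefE //; congr (_ *: _); ring.
Qed.

Lemma Glambda_binconv (Y : Type) (phi : nat -> Y -> C) (n : nat) x y :
  Glambda Gam R phi n x y = binconv (phi^~ y) (lambdaR Gam R ^~ x) n.
Proof.
rewrite Glambda_trinomial binconvAC.
by apply: eq_binconv => // k; rewrite lambdaR_binconv.
Qed.

End GeneralLambda.

Section TopRowExpansion.
Variables (R : comNzRingType) (n : nat).
Implicit Types (r : 'rV[R]_n.+1) (A : 'M[R]_(n, n.+1)).

Lemma col_mx_ord0 r A k : (col_mx r A : 'M_n.+1) ord0 k = r 0 k.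
Proof. by rewrite -(col_mxEu r A); congr (col_mx _ _ _ _); apply: val_inj. Qed.

Lemma col_mx_lift0 r A i k : (col_mx r A : 'M_n.+1) (lift ord0 i) k = A i k.
Proof. by rewrite -(col_mxEd r A); congr (col_mx _ _ _ _); apply: val_inj. Qed.

Lemma expand_det_col_mx r A :
  \det (col_mx r A : 'M_n.+1) = \sum_(k < n.+1) (-1) ^+ k * r 0 k * \det (col' k A).
Proof.
rewrite (expand_det_row _ ord0); apply: eq_bigr => k _; rewrite /cofactor.
have -> : row' ord0 (col' k (col_mx r A : 'M_n.+1)) = col' k A.
  by apply/matrixP => i j; rewrite [RHS]mxE 2![LHS]mxE col_mx_lift0.
by rewrite col_mx_ord0 mulrA [r 0 k * _]mulrC.
Qed.

Lemma det_col_mx_row A (i : 'I_n) : \det (col_mx (row i A) A : 'M_n.+1) = 0.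
Proof.
apply: (determinant_alternate (neq_lift ord0 i)) => k.
by rewrite col_mx_ord0 col_mx_lift0 mxE.
Qed.

End TopRowExpansion.

Section CofactorRows.
Variable K : realType.
Local Notation C := (complex K).
Implicit Types (gam : nat -> C) (n : nat).

Lemma Mrows_E gam n (i : 'I_n) (k : 'I_n.+1) :
  Mrows gam n i k = 'C(k, i)%:R * gam (k - i)%N.
Proof. by rewrite mxE; case: leqP => // lt_ki; rewrite bin_small // mul0r. Qed.

Lemma det_col'_Mrows_last gam n :
  \det (col' ord_max (Mrows gam n)) = gam 0%N ^+ n.
Proof.
have lift_max (i : 'I_n) : lift ord_max i = i :> nat.
  by rewrite /= /bump leqNgt ltn_ord.
rewrite -det_tr det_trig.
  by rewrite (eq_bigr (fun=> gam 0%N)) ?prodr_const ?card_ord // => i _;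
    rewrite !mxE lift_max leqnn binn subnn mul1r.
by apply/is_trig_mxP => i j lt_ij; rewrite !mxE lift_max leqNgt lt_ij.
Qed.

Lemma Mrows_cofactor_binconv (V : lmodType C) gam (u : nat -> V) n :
  \sum_(k < n.+1) ((-1) ^+ k * \det (col' k (Mrows gam n))) *: binconv gam u k
  = ((-1) ^+ n * gam 0%N ^+ n.+1) *: u n.
Proof.
pose coef (m : nat) := \sum_(k < n.+1)
  (-1) ^+ k * ('C(k, m)%:R * gam (k - m)%N) * \det (col' k (Mrows gam n)).
transitivity (\sum_(m < n.+1) coef m *: u m).
  under eq_bigr => k _ do rewrite (binconv_widen _ _ (leq_ord k)) scaler_sumr.
  rewrite exchange_big; apply: eq_bigr => m _; rewrite scaler_suml.
  by apply: eq_bigr => k _; rewrite scalerA; congr (_ *: _); ring.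
rewrite big_ord_recr big1 => [|m _]; last first.
  have -> : coef m = \det (col_mx (row m (Mrows gam n)) (Mrows gam n) : 'M_n.+1).
    by rewrite expand_det_col_mx; apply: eq_bigr => k _; rewrite mxE Mrows_E.
  by rewrite det_col_mx_row scale0r.
rewrite /coef big_ord_recr big1 => [|k _]; last first.
  by rewrite (bin_small (ltn_ord k)) mul0r mulr0 mul0r.
by rewrite /= binn subnn mul1r det_col'_Mrows_last exprS !add0r mulrA.
Qed.

End CofactorRows.

(* The identity is purely algebraic: positive stability of R and N > 0 only
   make the Gamma-function values meaningful, and are not needed. *)
Theorem theorem3p2 (K : realType) (N : nat) (hN : (0 < N)%N)
  (Gam : 'M[complex K]_N -> 'M[complex K]_N) (R : 'M[complex K]_N)
  (hR : positive_stable R)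
  (Y : Type) (phi : nat -> Y -> complex K) (y : Y) (hphi0 : phi 0%N y != 0)
  (gam : nat -> complex K)
  (hgam0 : gam 0%N = (phi 0%N y)^-1)
  (hgamS : forall n : nat, (1 <= n)%N ->
     gam n = - (phi 0%N y)^-1 *
       \sum_(1 <= j < n.+1) ('C(n, j))%:R * phi j y * gam (n - j)%N) :
  (forall x : complex K,
     Glambda Gam R phi 0 x y = (gam 0%N)^-1 *: cj Gam R 0) /\
  (forall (n : nat) (x : complex K), (1 <= n)%N ->
     Glambda Gam R phi n x y =
       ((-1) ^+ n / gam 0%N ^+ n.+1) *: detMn Gam R gam n x).
Proof.
have phi0_unit : phi 0%N y \is a GRing.unit by rewrite unitfE.
have gam0_neq0 : gam 0%N != 0 by rewrite hgam0 invr_eq0.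
have gam_inverse := binconv_recursive_inverse phi0_unit hgam0 hgamS.
have lambdaR_Glambda k x :
    lambdaR Gam R k x = binconv gam (fun m => Glambda Gam R phi m x y) k.
  rewrite -[LHS](binconvK (lambdaR Gam R ^~ x) k gam_inverse).
  by apply: eq_binconv => // m; rewrite Glambda_binconv.
split=> [x | n x _].
  rewrite Glambda_binconv /binconv /lambdaR !big_ord1 hgam0 invrK.
  by rewrite !mul1r expr0 scale1r.
rewrite /detMn; under eq_bigr do rewrite lambdaR_Glambda.
rewrite Mrows_cofactor_binconv scalerA mulrACA -exprMn mulrNN mulr1 expr1n.
by rewrite mul1r mulVf ?expf_neq0 // scale1r.
Qed.
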